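(* For every integer $k\ge 1$, $$\delta(k)=\tfrac12 k+O(\log k)\qquad (k\to\infty),$$ where $\delta(k)$ is as defined in the context. That is, there is an absolute constant $C$ such that $|\delta(k)-\tfrac12 k|\le C\log(k+1)$ for all $k\ge1$.
   Context: A function $f:\mathbb{N}\to\{+1,-1\}$ is completely multiplicative if $f(ab)=f(a)f(b)$ for all $a,b\in\mathbb{N}$. For an integer $q>1$ and a real-valued (i.e. $\{0,\pm1\}$-valued) Dirichlet character $\chi_q$ modulo $q$ (principal or not, primitive or not), a modified character $\tilde\chi_q$ is the completely multiplicative function $\mathbb{N}\to\{+1,-1\}$ defined on primes by $\tilde\chi_q(p)=\chi_q(p)$ if $p\nmid q$, and $\tilde\chi_q(p)=\eta(p)$ if $p\mid q$, where $\eta(p)\in\{+1,-1\}$ is an arbitrary choice of sign for each prime $p\mid q$. For such $\tilde\chi_q$ and $k\ge1$ set $$\delta(\tilde\chi_q;k)=\min_{n\in\mathbb{N}\cup\{0\}}\#\{1\le m\le k:\ \tilde\chi_q(n+m)=-1\},$$ the least number of $-1$ values of $\tilde\chi_q$ in a block of $k$ consecutive positive integers (this is the number of primes at which $\tilde\chi_q$ must be modified so that it takes the value $+1$ at $k$ consecutive integers). Define $\delta(k)=\sup\delta(\tilde\chi_q;k)$, the supremum over all integers $q>1$, all real Dirichlet characters $\chi_q$ mod $q$ and all sign choices $\eta$. *)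

From mathcomp Require Import all_boot all_algebra.
From mathcomp Require Import boolp.
Set Implicit Arguments. Unset Strict Implicit. Unset Printing Implicit Defensive.
Import GRing.Theory Num.Theory.
Local Open Scope ring_scope.

Definition real_dirichlet_char (q : nat) (chi : nat -> int) : Prop :=
  [/\ forall n, chi n \in [:: 0; 1; -1],
      forall n, chi (n + q)%N = chi n,
      forall m n, chi (m * n)%N = chi m * chi n
    & forall n, (chi n == 0) = ~~ coprime n q].

(* A completely
   multiplicative function is determined by its values at primes, so this is
   exactly the set of all modified characters tilde-chi_q. The value at 0 is
   irrelevant and unconstrained. *)
Definition modified_char (q : nat) (chi : nat -> int) (f : nat -> int) : Prop :=
  [/\ forall n, (0 < n)%N -> f n = 1 \/ f n = -1,
      forall a b, (0 < a)%N -> (0 < b)%N -> f (a * b)%N = f a * f b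
    & forall p, prime p -> ~~ (p %| q)%N -> f p = chi p].

Definition neg_count (f : nat -> int) (k n : nat) : nat :=
  (\sum_(1 <= m < k.+1) nat_of_bool (f (n + m)%N == (-1)%R))%N.

Lemma neg_count_attained (f : nat -> int) (k : nat) :
  exists d, `[< exists n, neg_count f k n = d >].
Proof. by exists (neg_count f k 0); apply/asboolP; exists 0%N. Qed.

Definition delta_char (f : nat -> int) (k : nat) : nat :=
  ex_minn (neg_count_attained f k).

(* delta(k) = sup over q > 1, real characters chi mod q, and sign choices
   (i.e. modified characters f). All such values lie in [0,k], so the sup is
   the max over d <= k of attained values. *)
Definition delta (k : nat) : nat :=
  \max_(d < k.+1 | `[< exists (q : nat) (chi f : nat -> int),
        [/\ (1 < q)%N, real_dirichlet_char q chi, modified_char q chi f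
          & delta_char f k = d] >]) d.

From mathcomp Require Import all_boot all_algebra.
From mathcomp Require Import boolp zify.
Set Implicit Arguments. Unset Strict Implicit. Unset Printing Implicit Defensive.
Import GRing.Theory Num.Theory.

(* If [chi u = -1] for some [u]
   prime to [q], then [f] is invariant under shifts by a high power of [q] on
   small arguments, so multiplication by [u] maps suitable windows of length [k]
   onto the progressions [r + u m] ([0 < r <= u], [m < k]) with every sign
   flipped; averaging these windows and the consecutive windows covering
   [1, u k] gives [2 delta <= k].  If [chi] is principal, [f n] depends only on
   the [q]-smooth part of [n] outside a sparse exceptional set, and such a
   function has nonnegative mean over a period, whence [2 delta <= k + 1].  For the character mod 3 with [eta(3) = 1], the partial sums
   satisfy [S n = S (n / 3) + [n = 1 mod 3]], so every window of length [k] has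
   sum at most [log_3 k + 1], hence at least [k / 2 - O(log k)] values [-1]. *)

Lemma big_ord_blocks (R : Type) (idx : R) (op : Monoid.law idx) a b (F : nat -> R) :
  \big[op/idx]_(n < b * a) F n = \big[op/idx]_(i < b) \big[op/idx]_(m < a) F (i * a + m).
Proof.
elim: b => [|b IH]; first by rewrite mul0n !big_ord0.
rewrite big_ord_recr /= -IH mulSn addnC -!(big_mkord xpredT).
rewrite (@big_cat_nat _ _ _ (b * a)) /= ?leq_addr //; congr (op _ _).
rewrite -{1}(add0n (b * a)) big_addn addnC addnK big_mkord.
by apply: eq_bigr => i _; rewrite addnC.
Qed.

Lemma sum_dvdn_succ N d : 0 < d -> \sum_(n < N) (d %| n.+1) = N %/ d.
Proof.
move=> d_gt0; elim: N => [|N IH]; first by rewrite big_ord0 div0n.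
by rewrite big_ord_recr /= IH divnS // addnC.
Qed.

Lemma coprimeMDl c q s : coprime (c * q + s) q = coprime s q.
Proof. by rewrite /coprime gcdnC gcdnMDl gcdnC. Qed.

Lemma gcdnM_coprime n A B : coprime A B -> gcdn n (A * B) = gcdn n A * gcdn n B.
Proof.
move=> coAB; apply/eqP; rewrite eqn_dvd; apply/andP; split.
  have gn := dvdn_gcdl n (A * B); have gAB := dvdn_gcdr n (A * B).
  rewrite muln_gcdl !muln_gcdr !dvdn_gcd.
  by rewrite gAB (dvdn_mulr _ gn) (dvdn_mulr _ gn) (dvdn_mull _ gn).
rewrite dvdn_gcd dvdn_mul ?dvdn_gcdr // andbT Gauss_dvd ?dvdn_gcdl //.
by apply: (coprime_dvdl (dvdn_gcdr _ _)); apply: (coprime_dvdr (dvdn_gcdr _ _)).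
Qed.

Lemma coprime_div_gcdnX n q a : 0 < n ->
  (forall p, prime p -> p %| q -> ~~ (p ^ a %| n)) -> coprime (n %/ gcdn n (q ^ a)) q.
Proof.
move=> n_gt0 noPow; set g := gcdn n (q ^ a); set m := n %/ g.
have g_gt0 : 0 < g by rewrite gcdn_gt0 n_gt0.
have defn : n = g * m by rewrite mulnC divnK // dvdn_gcdl.
have m_gt0 : 0 < m by move: n_gt0; rewrite defn muln_gt0 => /andP[].
apply: contraT => ncop.
have gt1 : 1 < gcdn m q by rewrite ltn_neqAle eq_sym ncop gcdn_gt0 m_gt0.
have p_pr := pdiv_prime gt1.
have pm : pdiv (gcdn m q) %| m := dvdn_trans (pdiv_dvd _) (dvdn_gcdl _ _).
have pq : pdiv (gcdn m q) %| q := dvdn_trans (pdiv_dvd _) (dvdn_gcdr _ _).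
set p := pdiv (gcdn m q) in p_pr pm pq.
have /negP[] := noPow p p_pr pq.
set r := q ^ a %/ g.
have defqa : q ^ a = g * r by rewrite mulnC divnK // dvdn_gcdr.
have pNr : ~~ (p %| r).
  apply/negP => pr; have : g * p %| g.
    by rewrite dvdn_gcd defn defqa !dvdn_pmul2l ?pm ?pr.
  by rewrite -{2}(muln1 g) dvdn_pmul2l // dvdn1 => /eqP p1; rewrite p1 in p_pr.
have : p ^ a %| g * r by rewrite -defqa dvdn_exp2r.
rewrite Gauss_dvdl; last by apply: coprimeXl; rewrite prime_coprime.
by move/dvdn_trans; apply; apply: dvdn_gcdl.
Qed.

Local Open Scope ring_scope.

Lemma sumr_crt (R : comNzRingType) A B (U V : nat -> R) :
  (0 < A)%N -> (0 < B)%N -> coprime A B ->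
  \sum_(x < A * B) U (x %% A)%N * V (x %% B)%N = (\sum_(i < A) U i) * (\sum_(j < B) V j).
Proof.
move=> A_gt0 B_gt0 coAB; have AB_gt0 : (0 < A * B)%N by rewrite muln_gt0 A_gt0.
rewrite mulr_suml; under [RHS]eq_bigr do rewrite mulr_sumr.
rewrite pair_bigA /=.
pose h (p : 'I_A * 'I_B) : 'I_(A * B) := Ordinal (ltn_pmod (chinese A B p.1 p.2) AB_gt0).
have hA p : (h p %% A = p.1)%N.
  by rewrite modn_dvdm ?dvdn_mulr // chinese_modl // modn_small.
have hB p : (h p %% B = p.2)%N.
  by rewrite modn_dvdm ?dvdn_mull // chinese_modr // modn_small.
rewrite (reindex h); first by apply: eq_bigr => p _; rewrite hA hB.
exists (fun x : 'I_(A * B) => (Ordinal (ltn_pmod x A_gt0), Ordinal (ltn_pmod x B_gt0))) => [p _|x _].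
  by case: p => i j; congr (_, _); apply: val_inj; [exact: (hA (i, j))|exact: (hB (i, j))].
by apply: val_inj => /=; rewrite -(chinese_mod coAB) modn_small.
Qed.

Section SignFunction.

Variable f : nat -> int.
Hypothesis f_sign : forall n, (0 < n)%N -> f n = 1 \/ f n = -1.
Hypothesis f_mul : forall a b, (0 < a)%N -> (0 < b)%N -> f (a * b)%N = f a * f b.

Lemma sign_fun1 : f 1%N = 1.
Proof. by have := @f_mul 1 1 isT isT; rewrite muln1; case: (@f_sign 1 isT) => ->. Qed.

Lemma sign_fun_ge n : (0 < n)%N -> -1 <= f n.
Proof. by move/f_sign => [] ->. Qed.

Lemma sign_fun_le n : (0 < n)%N -> f n <= 1.
Proof. by move/f_sign => [] ->. Qed.

Lemma sum_sign_window k x :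
  \sum_(m < k) f (x + m.+1)%N = k%:R - 2 * (neg_count f k x)%:R.
Proof.
rewrite /neg_count big_add1 /= big_mkord natr_sum mulr_sumr.
rewrite (eq_bigr (fun m : 'I_k => 1 - 2 * (f (x + m.+1)%N == -1)%:R)).
  by rewrite sumrB sumr_const card_ord.
by move=> m _; rewrite addnS; case: (f_sign (ltn0Sn (x + m))) => ->.
Qed.

Lemma count_sign_values N :
  (\sum_(n < N) (f n.+1 == 1%R) + \sum_(n < N) (f n.+1 == (-1)%R))%N = N.
Proof.
rewrite -big_split /= -[RHS]card_ord -sum1_card.
by apply: eq_bigr => n _; case: (f_sign (ltn0Sn n)) => ->.
Qed.

Lemma sum_sign_gcdn_pexp_ge0 p e : prime p -> 0 <= \sum_(n < p ^ e) f (gcdn n (p ^ e)).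
Proof.
move=> p_pr; case: e => [|e]; first by rewrite expn0 big_ord1 gcd0n sign_fun1.
have p_gt1 := prime_gt1 p_pr; have p_gt0 := prime_gt0 p_pr.
have unit_gcd i m : (0 < m < p)%N -> gcdn (i * p + m) (p ^ e.+1) = 1%N.
  case/andP=> m_gt0 m_lt_p; apply/eqP; rewrite -/(coprime _ _) coprimeXr //.
  rewrite coprimeMDl coprime_sym prime_coprime //.
  by apply/negP => /(dvdn_leq m_gt0); rewrite leqNgt m_lt_p.
rewrite -(big_mkord xpredT (fun n => f (gcdn n (p ^ e.+1)))) {1}expnSr big_mkord.
rewrite (big_ord_blocks _ p (p ^ e) (fun n => f (gcdn n (p ^ e.+1)))).
apply: sumr_ge0 => i _.
(* in each block of length [p], the residue [1] compensates the residue [0] *)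
rewrite (bigD1 (Ordinal p_gt0)) //= (bigD1 (Ordinal p_gt1)) //= addrA.
rewrite (unit_gcd i 1%N) ?p_gt1 // sign_fun1 addr_ge0 //.
  by rewrite addrC -lerBlDl sub0r sign_fun_ge // gcdn_gt0 expn_gt0 p_gt0 orbT.
apply: sumr_ge0 => m /andP[m0 m1]; rewrite unit_gcd ?sign_fun1 // ltn_ord andbT lt0n.
by apply: contra m0 => /eqP m00; apply/eqP; apply: val_inj.
Qed.

Lemma sum_sign_gcdn_ge0 Q : (0 < Q)%N -> 0 <= \sum_(n < Q) f (gcdn n Q).
Proof.
elim/ltn_ind: Q => Q IH Q_gt0; have [Q_le1|Q_gt1] := leqP Q 1.
  have -> : Q = 1%N by apply/eqP; rewrite eqn_leq Q_le1.
  by rewrite big_ord1 gcdn1 sign_fun1.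
set p := pdiv Q; have p_pr : prime p := pdiv_prime Q_gt1.
set A := (Q`_p)%N; set B := (Q`_p^')%N.
have defQ : (A * B)%N = Q by rewrite partnC.
have coAB : coprime A B by apply: coprime_partC.
have [A_gt0 B_gt0] : (0 < A)%N /\ (0 < B)%N by split; apply: part_gt0.
have B_lt_Q : (B < Q)%N by rewrite -defQ ltn_Pmull // p_part_gt1 pi_pdiv.
rewrite -(big_mkord xpredT (fun n => f (gcdn n Q))) -{1}defQ big_mkord.
rewrite (eq_bigr (fun x : 'I_(A * B) => f (gcdn (x %% A) A) * f (gcdn (x %% B) B))); last first.
  move=> x _; rewrite -{1}defQ gcdnM_coprime // f_mul ?gcdn_gt0 ?A_gt0 ?B_gt0 ?orbT //.
  by rewrite !gcdn_modl.
rewrite (sumr_crt (fun i => f (gcdn i A)) (fun j => f (gcdn j B))) //.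
apply: mulr_ge0; last exact: IH.
by rewrite /A p_part; apply: sum_sign_gcdn_pexp_ge0.
Qed.

Lemma sum_sign_gcdn_succ_ge0 Q k : (0 < Q)%N -> 0 <= \sum_(n < Q * k) f (gcdn n.+1 Q).
Proof.
move=> Q_gt0; rewrite mulnC; have shift := etrans (esym (@big_ord_recr int 0 +%R (k * Q) (fun n => f (gcdn n Q))))
  (@big_ord_recl int 0 +%R (k * Q) (fun n => f (gcdn n Q))).
rewrite /= gcd0n gcdnC gcdnMl addrC in shift; move/addrI: shift => <-.
rewrite (big_ord_blocks _ Q k (fun n => f (gcdn n Q))) sumr_ge0 // => i _.
under eq_bigr do rewrite gcdnC gcdnMDl gcdnC.
exact: sum_sign_gcdn_ge0.
Qed.

End SignFunction.

Lemma neg_countE f k x : neg_count f k x = (\sum_(m < k) (f (x + m.+1) == (-1)%R))%N.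
Proof. by rewrite /neg_count big_add1 big_mkord. Qed.

Lemma delta_char_le f k n : (delta_char f k <= neg_count f k n)%N.
Proof. by rewrite /delta_char; case: ex_minnP => m _; apply; apply/asboolP; exists n. Qed.

Lemma delta_char_attained f k : exists n, neg_count f k n = delta_char f k.
Proof. by rewrite /delta_char; case: ex_minnP => m /asboolP. Qed.

Lemma delta_char_le_k f k : (delta_char f k <= k)%N.
Proof.
apply: leq_trans (delta_char_le f k 0) _; rewrite neg_countE.
by rewrite -[X in (_ <= X)%N](card_ord k) -sum1_card leq_sum // => m; case: (_ == _).
Qed.

Lemma delta_char_le_count f k u :
  (u * delta_char f k <= \sum_(n < u * k) (f n.+1 == (-1)%R))%N.
Proof.
rewrite (big_ord_blocks _ k u (fun n => nat_of_bool (f n.+1 == (-1)%R))).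
rewrite -[u in (u * _)%N]card_ord -sum_nat_const leq_sum // => i _.
apply: leq_trans (delta_char_le f k (i * k)) _.
by rewrite neg_countE; under eq_bigr do rewrite addnS.
Qed.

Definition has_qpow_dvd q a n := [exists p : 'I_q.+1, prime p && (p %| q)%N && (p ^ a %| n)%N].

Lemma count_has_qpow_dvd q a N :
  (\sum_(n < N) has_qpow_dvd q a n.+1 <= q.+1 * (N %/ 2 ^ a))%N.
Proof.
apply: (@leq_trans (\sum_(n < N) \sum_(p < q.+1) (prime p && (p %| q) && (p ^ a %| n.+1)))%N).
  apply: leq_sum => n _; case: (boolP (has_qpow_dvd q a n.+1)) => // /existsP [p p_ok].
  by rewrite (bigD1 p) //= p_ok.
rewrite exchange_big -[X in (X * _)%N]card_ord -sum_nat_const leq_sum // => p _.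
have [/andP[p_pr p_dvd]|/negbTE p_bad] := boolP (prime p && (p %| q)%N); last first.
  by rewrite big1 // => n _; rewrite p_bad.
under eq_bigr do rewrite andTb.
rewrite sum_dvdn_succ ?expn_gt0 ?prime_gt0 //.
apply: leq_div2l; first by rewrite expn_gt0.
by case: a => [|a]; rewrite ?expn0 // leq_exp2r // prime_gt1.
Qed.

Lemma double_count_has_qpow_dvd_le q k : (0 < q)%N ->
  (2 * \sum_(n < q ^ (2 * q.+1 * k) * k) has_qpow_dvd q (2 * q.+1 * k) n.+1
    <= q ^ (2 * q.+1 * k))%N.
Proof.
move=> q_gt0; case: k => [|k]; first by rewrite muln0 big_ord0.
set a := (2 * q.+1 * k.+1)%N; set Q := (q ^ a)%N; set X := (Q * k.+1 %/ 2 ^ a)%N.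
apply: leq_trans (leq_mul (leqnn 2) (count_has_qpow_dvd q a (Q * k.+1))) _.
rewrite -/X -(leq_pmul2r (ltn0Sn k)).
have : (X * a <= X * 2 ^ a)%N by rewrite leq_mul // ltnW // ltn_expl.
have : (X * 2 ^ a <= Q * k.+1)%N by apply: leq_divM.
by rewrite /a; lia.
Qed.

Section ModifiedCharacter.

Variables (q : nat) (chi f : nat -> int).
Hypotheses (q_gt1 : (1 < q)%N) (chi_real : real_dirichlet_char q chi)
  (f_mod : modified_char q chi f).

Lemma real_char1 : chi 1%N = 1.
Proof.
case: chi_real => chi_val _ chi_mul chi0; have := chi_mul 1%N 1%N; rewrite muln1.
have : chi 1%N != 0 by rewrite chi0 coprime1n.
by move: (chi_val 1%N); rewrite !inE => /or3P [] /eqP ->.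
Qed.

Lemma modified_char1 : f 1%N = 1.
Proof. by case: f_mod => f_sign f_mul _; apply: sign_fun1. Qed.

Lemma real_char_periodic n t : chi (n + q * t)%N = chi n.
Proof.
case: chi_real => _ chi_per _ _; elim: t => [|t IH]; first by rewrite muln0 addn0.
by rewrite mulnS addnCA addnC chi_per.
Qed.

Lemma modified_char_coprime n : (0 < n)%N -> coprime n q -> f n = chi n.
Proof.
case: f_mod => _ f_mul f_prime; case: chi_real => _ _ chi_mul _.
elim/ltn_ind: n => n IH n_gt0 co_nq; have [n_le1|n_gt1] := leqP n 1.
  have -> : n = 1%N by apply/eqP; rewrite eqn_leq n_le1.
  by rewrite real_char1 modified_char1.
have p_pr := pdiv_prime n_gt1; have p_dvd := pdiv_dvd n.
have defn : n = (pdiv n * (n %/ pdiv n))%N by rewrite mulnC divnK.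
have p_gt0 := prime_gt0 p_pr.
have n'_gt0 : (0 < n %/ pdiv n)%N by rewrite divn_gt0 // dvdn_leq.
rewrite defn f_mul // chi_mul f_prime //; last by rewrite -prime_coprime // (coprime_dvdl p_dvd).
by rewrite IH ?ltn_Pdiv ?prime_gt1 // (coprime_dvdl _ co_nq) // dvdn_div.
Qed.

(* [s = gcdn s (q ^ K) * s'] with [s'] prime to [q] (as [s <= K]), and adding a
   multiple of [q ^ K.+1] changes neither the smooth factor nor [chi s']. *)
Lemma modified_char_shift K t s : (0 < s <= K)%N -> f (q ^ K.+1 * t + s)%N = f s.
Proof.
case/andP=> s_gt0 s_leK; case: (f_mod) => _ f_mul _.
set g := gcdn s (q ^ K); set s' := (s %/ g)%N; set r := (q ^ K %/ g)%N.
have g_gt0 : (0 < g)%N by rewrite gcdn_gt0 s_gt0.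
have defs : s = (g * s')%N by rewrite mulnC divnK // dvdn_gcdl.
have defqK : (q ^ K = g * r)%N by rewrite mulnC divnK // dvdn_gcdr.
have s'_gt0 : (0 < s')%N by move: s_gt0; rewrite defs muln_gt0 => /andP[].
have co_s'q : coprime s' q.
  apply: coprime_div_gcdnX => // p p_pr _; apply/negP => /(dvdn_leq s_gt0).
  by rewrite leqNgt (leq_ltn_trans s_leK) // ltn_expl // prime_gt1.
have -> : (q ^ K.+1 * t + s = g * (r * t * q + s'))%N.
  by rewrite expnS defqK {1}defs mulnDr; congr (_ + _)%N; lia.
rewrite [in RHS]defs !f_mul ?addn_gt0 ?s'_gt0 ?orbT //; congr (_ * _).
rewrite !modified_char_coprime ?addn_gt0 ?s'_gt0 ?orbT ?coprimeMDl //.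
by rewrite addnC mulnC real_char_periodic.
Qed.

Lemma delta_char_le_twisted_count u k r : coprime u q -> chi u = -1 -> (0 < r <= u)%N ->
  (delta_char f k <= \sum_(m < k) (f (r + u * m)%N == 1))%N.
Proof.
move=> co_uq chi_u /andP[r_gt0 r_le_u]; case: (f_mod) => _ f_mul _.
have u_gt0 : (0 < u)%N by apply: leq_trans r_le_u.
have f_u : f u = -1 by rewrite modified_char_coprime.
set Q := (q ^ (u * k).+1)%N.
have [a _] := Bezoutl Q u_gt0; rewrite (eqP (_ : coprime u Q)) ?coprimeXr // => dvd_u.
set x := ((Q * (a * r) + r) %/ u)%N.
have defux : (Q * (a * r) + r = u * x)%N.
  rewrite /x [(u * _)%N]mulnC divnK //; have -> : (Q * (a * r) + r = r * (1 + a * Q))%N by lia.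
  exact: dvdn_mull.
have x_gt0 : (0 < x)%N by rewrite -(ltn_pmul2l u_gt0) muln0 -defux ltn_addl.
apply: leq_trans (delta_char_le f k x.-1) _.
rewrite neg_countE; apply: eq_leq; apply: eq_bigr => m _.
have -> : (x.-1 + m.+1 = x + m)%N by rewrite addnS -addSn prednK.
(* multiplication by [u] maps the window after [x.-1] onto the progression [r + u * m],
   up to a multiple of [Q] *)
have : f (u * (x + m))%N = f (r + u * m)%N.
  rewrite mulnDr -defux -addnA /Q modified_char_shift // addn_gt0 r_gt0 /=.
  apply: leq_trans (_ : u + u * m <= u * k)%N; first by rewrite leq_add2r.
  by rewrite -mulnS leq_pmul2l.
by rewrite f_mul ?addn_gt0 ?x_gt0 // f_u mulN1r => <-; rewrite eqr_oppLR.
Qed.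

Lemma delta_char_double_le_nonprincipal u k : coprime u q -> chi u = -1 ->
  ((delta_char f k).*2 <= k)%N.
Proof.
move=> co_uq chi_u; case: (f_mod) => f_sign _ _.
have u_gt0 : (0 < u)%N.
  by case: u co_uq chi_u => // /eqP; rewrite gcd0n => q1; move: q_gt1; rewrite q1.
have plus : (u * delta_char f k <= \sum_(n < u * k) (f n.+1 == 1))%N.
  rewrite -[u in (u * _)%N]card_ord -sum_nat_const mulnC.
  rewrite (big_ord_blocks _ u k (fun n => nat_of_bool (f n.+1 == 1))) exchange_big.
  apply: leq_sum => r _; apply: leq_trans (@delta_char_le_twisted_count u k r.+1 co_uq chi_u _) _.
    by rewrite /= ltn_ord.
  by apply: eq_leq; apply: eq_bigr => m _; rewrite addSn addnC mulnC.
have minus := delta_char_le_count f k u.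
rewrite -(leq_pmul2l u_gt0) -addnn mulnDr -(count_sign_values f_sign (u * k)).
exact: leq_add.
Qed.

Section Principal.

Hypothesis chi_principal : forall m, coprime m q -> chi m = 1.

Lemma modified_char_principal_gcdn a n : (0 < n)%N ->
  f (gcdn n (q ^ a)) - 2 * (has_qpow_dvd q a n)%:R <= f n.
Proof.
move=> n_gt0; case: (f_mod) => f_sign f_mul _.
have g_gt0 : (0 < gcdn n (q ^ a))%N by rewrite gcdn_gt0 n_gt0.
have [big|small] := boolP (has_qpow_dvd q a n).
  have := sign_fun_le f_sign g_gt0; have := sign_fun_ge f_sign n_gt0; rewrite /=; lia.
have co : coprime (n %/ gcdn n (q ^ a)) q.
  apply: coprime_div_gcdnX => // p p_pr p_dvd; apply: contra small => pa.
  have p_lt : (p < q.+1)%N by rewrite ltnS dvdn_leq // ltnW.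
  by apply/existsP; exists (Ordinal p_lt); rewrite /= p_pr p_dvd pa.
have m_gt0 : (0 < n %/ gcdn n (q ^ a))%N by rewrite divn_gt0 // dvdn_leq // dvdn_gcdl.
have -> : f n = f (gcdn n (q ^ a)).
  rewrite -{1}(divnK (dvdn_gcdl n (q ^ a))) mulnC f_mul //.
  by rewrite [f (_ %/ _)]modified_char_coprime // chi_principal // mulr1.
by rewrite mulr0 subr0.
Qed.

Lemma delta_char_double_le_principal k : (0 < k)%N -> ((delta_char f k).*2 <= k.+1)%N.
Proof.
move=> k_gt0; case: (f_mod) => f_sign f_mul _.
have q_gt0 : (0 < q)%N by apply: ltnW.
(* [f n = f (gcdn n Q)] for all but at most [Q / 2] of the [n <= Q k], and the
   sum of [f (gcdn n Q)] over each period of length [Q] is nonnegative. *)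
set a := (2 * q.+1 * k)%N; set Q := (q ^ a)%N.
have Q_gt0 : (0 < Q)%N by rewrite expn_gt0 q_gt0.
set c := (\sum_(n < Q * k) (f n.+1 == (-1)%R))%N.
set e := (\sum_(n < Q * k) has_qpow_dvd q a n.+1)%N.
have Qd_le_c : (Q * delta_char f k <= c)%N := delta_char_le_count f k Q.
have sum_f : \sum_(n < Q * k) f n.+1 = (Q * k)%:R - 2 * c%:R.
  have -> : c = neg_count f (Q * k) 0 by rewrite neg_countE.
  by rewrite -(sum_sign_window f_sign).
have sum_gcd := sum_sign_gcdn_succ_ge0 f_sign f_mul k Q_gt0.
have two_e : (2 * e <= Q)%N := double_count_has_qpow_dvd_le k q_gt0.
have : \sum_(n < Q * k) (f (gcdn n.+1 Q) - 2 * (has_qpow_dvd q a n.+1)%:R)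
    <= \sum_(n < Q * k) f n.+1.
  by apply: ler_sum => n _; apply: modified_char_principal_gcdn.
rewrite sumrB -mulr_sumr -natr_sum sum_f -/e.
move: sum_gcd two_e Qd_le_c; set s := \sum_(n < _) _ => *.
have : (Q * (delta_char f k).*2 <= Q * k.+1)%N by lia.
by rewrite leq_pmul2l.
Qed.

End Principal.

End ModifiedCharacter.

Definition chi3 (n : nat) : int :=
  if (n %% 3 == 0)%N then 0 else if (n %% 3 == 1)%N then 1 else -1.

(* the modification of [chi3] with [eta(3) = 1] *)
Definition tchi3 (n : nat) : int := chi3 (n`_(3^'))%N.

Lemma chi3M m n : chi3 (m * n) = chi3 m * chi3 n.
Proof.
rewrite /chi3 -modnMm.
have := ltn_pmod m (isT : (0 < 3)%N); have := ltn_pmod n (isT : (0 < 3)%N).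
by case: (m %% 3)%N => [|[|[|x]]] //; case: (n %% 3)%N => [|[|[|y]]].
Qed.

Lemma chi3_real : real_dirichlet_char 3 chi3.
Proof.
split=> [n|n|m n|n]; last 2 first.
- exact: chi3M.
- by rewrite coprime_sym prime_coprime // negbK /dvdn /chi3; case: ifP => // _; case: ifP.
- by rewrite /chi3; case: ifP => _; [|case: ifP => _]; rewrite !inE.
- by rewrite /chi3 modnDr.
Qed.

Lemma tchi3_modified : modified_char 3 chi3 tchi3.
Proof.
split=> [n n_gt0|a b a_gt0 b_gt0|p p_pr p3]; rewrite /tchi3.
- have := coprime_partC 3%N 3%N n; rewrite (@part_pnat_id 3%N 3%N) ?pnat_id //.
  by rewrite /chi3 prime_coprime // /dvdn => /negbTE ->; case: ifP => _; [left|right].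
- by rewrite partnM // chi3M.
- by rewrite part_pnat_id // pnatE // !inE; apply: contra p3 => /eqP ->.
Qed.

Definition tchi3_sum n : int := \sum_(m < n) tchi3 m.+1.

Lemma tchi3_sumS n : tchi3_sum n.+1 = tchi3_sum n + tchi3 n.+1.
Proof. exact: big_ord_recr. Qed.

Lemma tchi3_sum_add n k : tchi3_sum (n + k) = tchi3_sum n + \sum_(m < k) tchi3 (n + m.+1)%N.
Proof.
elim: k => [|k IH]; first by rewrite addn0 big_ord0 addr0.
by rewrite addnS tchi3_sumS IH big_ord_recr /= addrA addnS.
Qed.

Lemma tchi3_mul3 t : (0 < t)%N -> tchi3 (3 * t) = tchi3 t.
Proof.
by move=> t_gt0; rewrite /tchi3 partnM // part_p'nat ?mul1n // pnatE // !inE.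
Qed.

Lemma tchi3_mul3D t r : (0 < r < 3)%N -> tchi3 (3 * t + r) = chi3 r.
Proof.
case/andP=> r_gt0 r_lt3; have nd : ~~ (3 %| 3 * t + r)%N.
  by rewrite dvdn_addr ?dvdn_mulr //; apply/negP => /(dvdn_leq r_gt0); rewrite leqNgt r_lt3.
by rewrite /tchi3 part_pnat_id ?p'natE // /chi3 mulnC modnMDl.
Qed.

Lemma tchi3_sum_mul3 t : tchi3_sum (3 * t) = tchi3_sum t.
Proof.
elim: t => [|t IH]; first by rewrite muln0.
rewrite mulnS !tchi3_sumS -[(3 * t).+3](mulnS 3 t) -[(3 * t).+2]addn2 -[(3 * t).+1]addn1.
by rewrite !tchi3_mul3D // tchi3_mul3 // IH /chi3 /= addrK.
Qed.

Lemma tchi3_sum_div3 n : tchi3_sum n = tchi3_sum (n %/ 3) + (n %% 3 == 1)%N%:R.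
Proof.
rewrite {1}(divn_eq n 3) mulnC; have := ltn_pmod n (isT : (0 < 3)%N).
case: (n %% 3)%N => [|[|[|x]]] // _.
- by rewrite addn0 tchi3_sum_mul3 addr0.
- by rewrite addn1 tchi3_sumS tchi3_sum_mul3 -[(3 * _).+1]addn1 tchi3_mul3D.
- rewrite addn2 !tchi3_sumS tchi3_sum_mul3 -[(3 * _).+2]addn2 -[(3 * _).+1]addn1.
  by rewrite !tchi3_mul3D // /chi3 /= addrK addr0.
Qed.

Lemma tchi3_sum_incr_le e k n : (k <= 3 ^ e)%N -> tchi3_sum (n + k) <= tchi3_sum n + e.+1%:R.
Proof.
elim: e k n => [|e IH] k n.
  rewrite expn0; case: k => [|[|k]] // _; first by rewrite addn0 lerDl.
  rewrite addn1 tchi3_sumS lerD2l.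
  by case: tchi3_modified => tchi3_sign _ _; exact: (sign_fun_le tchi3_sign (ltn0Sn n)).
move=> k_le; set n' := (n %/ 3)%N; set m := ((n + k) %/ 3)%N.
have n'_le_m : (n' <= m)%N by apply: leq_div2r; apply: leq_addr.
have m_le : (m <= n' + 3 ^ e)%N.
  apply: leq_trans (_ : ((n + 3 ^ e.+1) %/ 3 <= _)%N); first by rewrite leq_div2r ?leq_add2l.
  by rewrite expnSr addnC divnMDl // addnC.
have : tchi3_sum m <= tchi3_sum n' + e.+1%:R.
  by have := IH (m - n')%N n'; rewrite subnKC //; apply; rewrite leq_subLR.
rewrite (tchi3_sum_div3 (n + k)) (tchi3_sum_div3 n) -/n' -/m.
case: (_ == 1)%N; case: (_ == 1)%N; rewrite /= -!natr1; lia.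
Qed.

Lemma neg_count_tchi3_ge k n : (k <= (neg_count tchi3 k n).*2 + (trunc_log 2 k).+2)%N.
Proof.
case: tchi3_modified => tchi3_sign _ _.
have k_le : (k <= 3 ^ (trunc_log 2 k).+1)%N.
  apply/ltnW/(leq_trans (trunc_log_ltn k (isT : (1 < 2)%N))).
  by rewrite leq_exp2r.
have := tchi3_sum_incr_le n k_le.
rewrite tchi3_sum_add lerD2l (sum_sign_window tchi3_sign); lia.
Qed.

Lemma delta_char_double_le q chi f k : (1 < q)%N -> real_dirichlet_char q chi ->
  modified_char q chi f -> (0 < k)%N -> ((delta_char f k).*2 <= k.+1)%N.
Proof.
move=> q_gt1 chi_real f_mod k_gt0.
case: (pselect (exists u, coprime u q /\ chi u = -1)) => [[u [co_uq chi_u]]|nonprincipal].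
  exact: leqW (delta_char_double_le_nonprincipal q_gt1 chi_real f_mod k co_uq chi_u).
apply: (delta_char_double_le_principal q_gt1 chi_real f_mod _ k_gt0) => m co_mq; case: chi_real => chi_val _ _ chi0.
have : chi m != 0 by rewrite chi0 co_mq.
move: (chi_val m); rewrite !inE => /or3P [] /eqP chi_m; rewrite chi_m // => _.
by case: nonprincipal; exists m.
Qed.

Lemma delta_double_le k : (0 < k)%N -> ((delta k).*2 <= k.+1)%N.
Proof.
move=> k_gt0; suff : (delta k <= k.+1 %/ 2)%N by lia.
apply/bigmax_leqP => d /asboolP [q [chi [f [q_gt1 chi_real f_mod <-]]]].
by have := delta_char_double_le q_gt1 chi_real f_mod k_gt0; lia.
Qed.

Lemma delta_ge k : (k <= (delta k).*2 + (trunc_log 2 k).+2)%N.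
Proof.
have [n def_d] := delta_char_attained tchi3 k.
apply: leq_trans (neg_count_tchi3_ge k n) _; rewrite leq_add2r leq_double def_d.
have d_lt : (delta_char tchi3 k < k.+1)%N by rewrite ltnS delta_char_le_k.
apply: (leq_bigmax_cond (Ordinal d_lt)); apply/asboolP.
by exists 3%N, chi3, tchi3; split; [| exact: chi3_real | exact: tchi3_modified |].
Qed.

From Stdlib Require Import Reals Lra.
Local Open Scope R_scope.

Lemma le_INR_leq (m n : nat) : (m <= n)%nat -> INR m <= INR n.
Proof. by move/leP; apply: le_INR. Qed.

Lemma INR_double (n : nat) : INR n.*2 = 2 * INR n.
Proof. by rewrite -addnn -plusE plus_INR; lra. Qed.

Lemma INR_expn2 (L : nat) : INR (expn 2 L) = 2 ^ L.
Proof. by elim: L => [|L IH] //; rewrite expnS -multE mult_INR IH /=; lra. Qed.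

Lemma ln_le x y : 0 < x -> x <= y -> ln x <= ln y.
Proof.
move=> x_gt0 /Rle_lt_or_eq_dec [/(ln_increasing _ _ x_gt0)/Rlt_le //|->]; exact: Rle_refl.
Qed.

Lemma Rabs_half_deviation_le (k d L : nat) : (0 < k)%nat -> (expn 2 L <= k)%nat ->
  (d.*2 <= k.+1)%nat -> (k <= d.*2 + L.+2)%nat -> Rabs (INR d - INR k / 2) <= 3 * ln (INR k + 1).
Proof.
move=> /le_INR_leq k_ge1 /le_INR_leq pow_le /le_INR_leq up /le_INR_leq low.
rewrite INR_expn2 in pow_le; rewrite INR_double S_INR in up.
rewrite -plusE plus_INR INR_double !S_INR in low; rewrite /= in k_ge1.
have ln2_gt := ln_lt_2; have L_ge0 := pos_INR L.
have lnL : INR L * ln 2 <= ln (INR k + 1).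
  by rewrite -ln_pow; [apply: ln_le; [apply: pow_lt|]|]; lra.
have ln2_le : ln 2 <= ln (INR k + 1) by apply: ln_le; lra.
have : INR L / 2 <= INR L * ln 2 by nra.
by move=> *; apply: Rabs_le; lra.
Qed.

Theorem theorem1p2 :
  exists C : R, forall k : nat, (1 <= k)%nat ->
    Rabs (INR (delta k) - INR k / 2) <= C * ln (INR k + 1).
Proof.
exists 3 => k k_gt0; have pow_le := trunc_logP (isT : (1 < 2)%nat) k_gt0.
exact: Rabs_half_deviation_le k_gt0 pow_le (delta_double_le k_gt0) (delta_ge k).
Qed.
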